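(* Let $l$ be a symmetric function on $\Omega\times\Omega$ and $v_1,\ldots,v_p$ functions on $\Omega$; let $\mathcal{X}=\{x_1,\ldots,x_n\}\subset\Omega$ be such that $\mathbf{V}=[v_j(x_i)]\in\mathbb{R}^{n\times p}$ has full column rank and $\widetilde{\mathbf{L}}=(\mathbf{I}-\mathbf{Q}\mathbf{Q}^\top)\mathbf{L}(\mathbf{I}-\mathbf{Q}\mathbf{Q}^\top)$ is positive semi-definite, where $\mathbf{L}=[l(x_i,x_j)]$ and $\mathbf{Q}$ is an orthonormal basis of the column span of $\mathbf{V}$. For $\varepsilon>0$ consider GP regression with prior covariance $k_\varepsilon(x,y)=l(x,y)+\varepsilon^{-1}\sum_{i=1}^p v_i(x)v_i(y)$, observations $\mathbf{y}$ at $\mathcal{X}$ and noise variance $\sigma^2>0$, with predictive variance $\mathrm{Var}_\varepsilon(f(x)\mid\mathbf{y})=k_\varepsilon(x,x)-\mathbf{k}^\varepsilon_{x,\mathcal{X}}(\mathbf{K}_\varepsilon+\sigma^2\mathbf{I})^{-1}(\mathbf{k}^\varepsilon_{x,\mathcal{X}})^\top$, where $\mathbf{k}^\varepsilon_{x,\mathcal{X}}=[k_\varepsilon(x,x_i)]_i$ and $\mathbf{K}_\varepsilon=[k_\varepsilon(x_i,x_j)]$. Then for every $x\in\Omega$, as $\varepsilon\to0$, $$\mathrm{Var}_\varepsilon(f(x)\mid\mathbf{y})=l(x,x)-(\mathbf{l}_{x,\mathcal{X}}\ \ \mathbf{v}_x)\begin{pmatrix}\mathbf{L}+\sigma^2\mathbf{I}&\mathbf{V}\\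 \mathbf{V}^\top&\mathbf{0}\end{pmatrix}^{-1}\begin{pmatrix}\mathbf{l}_{x,\mathcal{X}}^\top\\ \mathbf{v}_x^\top\end{pmatrix}+O(\varepsilon),$$ where $\mathbf{l}_{x,\mathcal{X}}=[l(x,x_1),\ldots,l(x,x_n)]$ and $\mathbf{v}_x=[v_1(x),\ldots,v_p(x)]$.
   Context: In particular the predictive variance does not diverge as $\varepsilon\to0$ even though the prior variance along the functions $v_i$ tends to infinity. *)

From mathcomp Require Import all_boot all_order all_algebra.
Set Implicit Arguments. Unset Strict Implicit. Unset Printing Implicit Defensive.
Import Order.TTheory GRing.Theory Num.Theory.
Local Open Scope ring_scope.

Definition psd (R : realFieldType) (n : nat) (A : 'M[R]_n) : Prop :=
  forall u : 'cV[R]_n, 0 <= (u^T *m A *m u) 0 0.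

Definition gramL (R : realFieldType) (Omega : Type) (n : nat)
  (l : Omega -> Omega -> R) (xs : 'I_n -> Omega) : 'M[R]_n :=
  \matrix_(i, j) l (xs i) (xs j).

Definition basisV (R : realFieldType) (Omega : Type) (n p : nat)
  (v : 'I_p -> Omega -> R) (xs : 'I_n -> Omega) : 'M[R]_(n, p) :=
  \matrix_(i, j) v j (xs i).

Definition keps (R : realFieldType) (Omega : Type) (p : nat)
  (l : Omega -> Omega -> R) (v : 'I_p -> Omega -> R) (eps : R) (x y : Omega) : R :=
  l x y + eps^-1 * \sum_(i < p) v i x * v i y.

Definition gp_var (R : realFieldType) (Omega : Type) (n : nat)
  (k : Omega -> Omega -> R) (xs : 'I_n -> Omega) (s2 : R) (x : Omega) : R :=
  let kx : 'rV[R]_n := \row_i k x (xs i) in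
  let K : 'M[R]_n := \matrix_(i, j) k (xs i) (xs j) in
  k x x - (kx *m invmx (K + s2%:M) *m kx^T) 0 0.

Definition limit_var (R : realFieldType) (Omega : Type) (n p : nat)
  (l : Omega -> Omega -> R) (v : 'I_p -> Omega -> R) (xs : 'I_n -> Omega)
  (s2 : R) (x : Omega) : R :=
  let L := gramL l xs in
  let V := basisV v xs in
  let w : 'rV[R]_(n + p) := row_mx (\row_i l x (xs i)) (\row_j v j x) in
  let M : 'M[R]_(n + p) := block_mx (L + s2%:M) V V^T 0 in
  l x x - (w *m invmx M *m w^T) 0 0.

(* Write w = (l_x, v_x) and N_eps = [[L + s2 I, V]; [V^T, -eps I]].  Eliminating
   the second block of N_eps z = w^T shows that the GP variance for k_eps is
   l(x,x) - w N_eps^-1 w^T, while the claimed limit is l(x,x) - w N_0^-1 w^T.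
   N_0 is invertible because V has full column rank and L + s2 I is positive
   definite on ker V^T: there P = I - Q Q^T acts as the identity, so the quadratic
   form of L agrees with that of the psd matrix P L P.  As N_eps = N_0 - eps E with
   E = diag(0, I), a Neumann-type argument bounds N_eps^-1 w^T by twice N_0^-1 w^T
   for small eps, and the resolvent identity
   N_eps^-1 - N_0^-1 = eps N_0^-1 E N_eps^-1 gives the O(eps) estimate. *)

From mathcomp Require Import all_boot all_order all_algebra.
From mathcomp Require Import ring lra.
Import Order.TTheory GRing.Theory Num.Theory.
Set Implicit Arguments. Unset Strict Implicit.
Local Open Scope ring_scope.

Section EntrywiseNorm.
Variable R : realFieldType.

Definition mxnorm1 m q (A : 'M[R]_(m, q)) : R := \sum_i \sum_j `|A i j|.

Lemma mxnorm1_ge0 m q (A : 'M[R]_(m, q)) : 0 <= mxnorm1 A.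
Proof. by apply: sumr_ge0 => i _; apply: sumr_ge0. Qed.

Lemma ler_mxnorm1_row m q (A : 'M[R]_(m, q)) i : \sum_j `|A i j| <= mxnorm1 A.
Proof.
by rewrite /mxnorm1 (bigD1 i) //= lerDl; apply: sumr_ge0 => k _; apply: sumr_ge0.
Qed.

Lemma ler_mxnorm1_entry m q (A : 'M[R]_(m, q)) i j : `|A i j| <= mxnorm1 A.
Proof.
by apply: le_trans (ler_mxnorm1_row A i); rewrite (bigD1 j) //= lerDl sumr_ge0.
Qed.

Lemma mxnorm10 m q : mxnorm1 (0 : 'M[R]_(m, q)) = 0.
Proof.
by rewrite /mxnorm1 big1 // => i _; rewrite big1 // => j _; rewrite mxE normr0.
Qed.

Lemma mxnorm1_le0 m q (A : 'M[R]_(m, q)) : mxnorm1 A <= 0 -> A = 0.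
Proof.
move=> A_le0; apply/matrixP => i j; rewrite mxE; apply/eqP.
by rewrite -normr_le0 (le_trans (ler_mxnorm1_entry A i j)).
Qed.

Lemma mxnorm1D m q (A B : 'M[R]_(m, q)) : mxnorm1 (A + B) <= mxnorm1 A + mxnorm1 B.
Proof.
rewrite /mxnorm1 -big_split; apply: ler_sum => i _; rewrite -big_split.
by apply: ler_sum => j _; rewrite mxE ler_normD.
Qed.

Lemma mxnorm1Z m q a (A : 'M[R]_(m, q)) : mxnorm1 (a *: A) = `|a| * mxnorm1 A.
Proof.
rewrite /mxnorm1 mulr_sumr; apply: eq_bigr => i _; rewrite mulr_sumr.
by apply: eq_bigr => j _; rewrite mxE normrM.
Qed.

Lemma mxnorm1M m k q (A : 'M[R]_(m, k)) (B : 'M[R]_(k, q)) :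
  mxnorm1 (A *m B) <= mxnorm1 A * mxnorm1 B.
Proof.
rewrite /mxnorm1 mulr_suml; apply: ler_sum => i _.
apply: (@le_trans _ _ (\sum_j \sum_l `|A i l| * `|B l j|)).
  apply: ler_sum => j _; rewrite mxE; apply: le_trans (ler_norm_sum _ _ _) _.
  by apply: ler_sum => l _; rewrite normrM.
rewrite exchange_big mulr_suml; apply: ler_sum => l _ /=.
by rewrite -mulr_sumr ler_wpM2l // ler_mxnorm1_row.
Qed.

End EntrywiseNorm.

Section SaddlePoint.
Variable F : fieldType.

Lemma ker0_unitmx m (A : 'M[F]_m) :
  (forall y : 'cV_m, A *m y = 0 -> y = 0) -> A \in unitmx.
Proof.
move=> A_inj; rewrite -unitmx_tr -row_free_unit; apply: inj_row_free => u uA0.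
have /A_inj : A *m u^T = 0 by rewrite -[A]trmxK -trmx_mul uA0 trmx0.
by move/(congr1 trmx); rewrite trmxK trmx0.
Qed.

Lemma saddle_point_unitmx n p (A : 'M[F]_n) (V : 'M[F]_(n, p)) :
  \rank V = p ->
  (forall a : 'cV_n, V^T *m a = 0 -> (a^T *m A *m a) 0 0 = 0 -> a = 0) ->
  block_mx A V V^T 0 \in unitmx.
Proof.
move=> rankV A_def; apply: ker0_unitmx => y.
rewrite -[y]vsubmxK mul_block_col mul0mx addr0 -col_mx0.
move: (usubmx y) (dsubmx y) => a b /eq_col_mx[Aab Va].
have Vta : a^T *m V = 0 by rewrite -[_ *m V]trmxK trmx_mul trmxK Va trmx0.
have a0 : a = 0.
  apply: A_def Va _.
  have : a^T *m (A *m a + V *m b) = 0 by rewrite Aab mulmx0.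
  by rewrite mulmxDr !mulmxA Vta mul0mx addr0 => ->; rewrite mxE.
have b0 : b = 0.
  have VT_free : row_free V^T by rewrite /row_free mxrank_tr rankV.
  have Vb : V *m b = 0 by move: Aab; rewrite a0 mulmx0 add0r.
  have : b^T *m V^T == 0 by rewrite -trmx_mul Vb trmx0.
  by rewrite mulmx_free_eq0 // -trmx0 (inj_eq trmx_inj) => /eqP.
by rewrite a0 b0 col_mx0.
Qed.

Lemma saddle_point_schur n p (A : 'M[F]_n) (V : 'M[F]_(n, p))
    (lx : 'rV[F]_n) (vx : 'rV[F]_p) (eps : F) :
  eps != 0 -> block_mx A V V^T (- eps%:M) \in unitmx ->
  let kx := lx + eps^-1 *: (vx *m V^T) in
  kx *m invmx (A + eps^-1 *: (V *m V^T)) *m kx^T - eps^-1 *: (vx *m vx^T)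
  = row_mx lx vx *m invmx (block_mx A V V^T (- eps%:M)) *m (row_mx lx vx)^T.
Proof.
move=> eps_neq0 N_unit kx; set t := eps^-1; set N := block_mx _ _ _ _.
set K := A + t *: (V *m V^T).
have eps_t : eps * t = 1 by rewrite mulfV.
have K_unit : K \in unitmx.
  apply: ker0_unitmx => y Ky.
  have : N *m col_mx y (t *: (V^T *m y)) = 0.
    rewrite mul_block_col -col_mx0 mulNmx mul_scalar_mx scalerA eps_t scale1r.
    by rewrite subrr -Ky /K mulmxDl -scalemxAr -scalemxAl mulmxA.
  move/(congr1 (mulmx (invmx N))); rewrite mulKmx // mulmx0 => /eqP.
  by rewrite col_mx_eq0 => /andP[/eqP].
set X := invmx K.
have kxT : kx^T = lx^T + t *: (V *m vx^T) by rewrite linearD linearZ /= trmx_mul trmxK.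
set z := col_mx (X *m kx^T) (t *: (V^T *m X *m kx^T - vx^T)).
have Nz : N *m z = (row_mx lx vx)^T.
  rewrite mul_block_col tr_row_mx; congr col_mx.
    have -> : A *m (X *m kx^T) + V *m (t *: (V^T *m X *m kx^T - vx^T))
              = K *m X *m kx^T - t *: (V *m vx^T).
      rewrite /K !mulmxDl -!scalemxAr -!scalemxAl mulmxBr scalerBr.
      by rewrite !mulmxA addrA.
    by rewrite mulmxV // mul1mx kxT addrK.
  by rewrite mulNmx mul_scalar_mx scalerA eps_t scale1r opprB mulmxA addrC subrK.
rewrite -Nz -[RHS]mulmxA mulKmx // mul_row_col -scalemxAr mulmxBr scalerBr.
by rewrite {1}/kx !mulmxA !mulmxDl !scalemxAl addrA.
Qed.

End SaddlePoint.

Section DefiniteOnKernel.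
Variable R : realFieldType.

Lemma tr_mulmx_self_eq0 m (a : 'cV[R]_m) : (a^T *m a) 0 0 = 0 -> a = 0.
Proof.
rewrite mxE => /eqP; rewrite psumr_eq0 => [/allP a0|i _]; last first.
  by rewrite !mxE -expr2 sqr_ge0.
apply/matrixP => i j; rewrite (ord1 j) [RHS]mxE; apply/eqP.
by rewrite -sqrf_eq0 expr2; have := a0 i (mem_index_enum _); rewrite mxE.
Qed.

Lemma tr_mulmx_self_ge0 m (a : 'cV[R]_m) : 0 <= (a^T *m a) 0 0.
Proof. by rewrite mxE sumr_ge0 // => i _; rewrite !mxE -expr2 sqr_ge0. Qed.

Lemma projected_psd_ge0 n p (L : 'M[R]_n) (Q V : 'M[R]_(n, p)) (a : 'cV[R]_n) :
  (Q^T <= V^T)%MS -> psd ((1%:M - Q *m Q^T) *m L *m (1%:M - Q *m Q^T)) ->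
  V^T *m a = 0 -> 0 <= (a^T *m L *m a) 0 0.
Proof.
move=> /submxP[D QD] PLP_psd Va; set P := 1%:M - Q *m Q^T.
have Pa : P *m a = a by rewrite mulmxBl mul1mx -mulmxA QD -mulmxA Va !mulmx0 subr0.
have PT : P^T = P by rewrite /P linearB /= trmx1 trmx_mul trmxK.
have aP : a^T *m P = a^T by rewrite -PT -trmx_mul Pa.
by have := PLP_psd a; rewrite !mulmxA aP -mulmxA Pa.
Qed.

Lemma addmx_scalar_definite n p (L : 'M[R]_n) (V : 'M[R]_(n, p)) s2 :
  (forall a : 'cV_n, V^T *m a = 0 -> 0 <= (a^T *m L *m a) 0 0) -> 0 < s2 ->
  forall a : 'cV_n, V^T *m a = 0 -> (a^T *m (L + s2%:M) *m a) 0 0 = 0 -> a = 0.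
Proof.
move=> L_ge0 s2_gt0 a Va; have := L_ge0 a Va; have := tr_mulmx_self_ge0 a.
rewrite mulmxDr mulmxDl mul_mx_scalar -scalemxAl !mxE.
move=> aa_ge0 aLa_ge0 form0; apply: tr_mulmx_self_eq0.
rewrite mxE; nra.
Qed.

End DefiniteOnKernel.

Lemma gp_var_keps_saddle (R : realFieldType) (Omega : Type) n p
    (l : Omega -> Omega -> R) (v : 'I_p -> Omega -> R) (xs : 'I_n -> Omega)
    (s2 eps : R) (x : Omega) :
  eps != 0 ->
  let V := basisV v xs in
  let N := block_mx (gramL l xs + s2%:M) V V^T (- eps%:M) in
  let w := row_mx (\row_i l x (xs i)) (\row_j v j x) in
  N \in unitmx ->
  gp_var (keps l v eps) xs s2 x = l x x - (w *m invmx N *m w^T) 0 0.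
Proof.
move=> eps_neq0 V N w N_unit; rewrite -saddle_point_schur //= /gp_var.
have -> : \row_i keps l v eps x (xs i)
          = \row_i l x (xs i) + eps^-1 *: (\row_j v j x *m V^T).
  apply/matrixP => i j; rewrite !mxE /keps.
  by congr (_ + _ * _); apply: eq_bigr => k _; rewrite !mxE.
have -> : \matrix_(i, j) keps l v eps (xs i) (xs j) + s2%:M
          = gramL l xs + s2%:M + eps^-1 *: (V *m V^T).
  apply/matrixP => i j; rewrite !mxE /keps addrAC.
  by congr (_ + _ * _ + _); apply: eq_bigr => k _; rewrite !mxE.
have vxvxE : \sum_k v k x * v k x = (\row_j v j x *m (\row_j v j x)^T) 0 0.
  by rewrite mxE; apply: eq_bigr => k _; rewrite !mxE.
have entryBZ (Y S : 'M[R]_1) c : (Y - c *: S) 0 0 = Y 0 0 - c * S 0 0.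
  by rewrite !mxE.
by rewrite /keps vxvxE entryBZ; ring.
Qed.

Section Perturbation.
Variables (R : realFieldType) (m : nat) (M E : 'M[R]_m) (eps : R).
Hypothesis M_unit : M \in unitmx.
Hypothesis eps_small : `|eps| * mxnorm1 (invmx M *m E) <= 2^-1.

Lemma perturbed_solveE q (y r : 'M[R]_(m, q)) :
  (M - eps *: E) *m y = r -> y = invmx M *m r + eps *: (invmx M *m E *m y).
Proof.
move=> Ny; have : M *m y = r + eps *: (E *m y) by rewrite -Ny mulmxBl -scalemxAl subrK.
by move/(congr1 (mulmx (invmx M))); rewrite mulKmx // mulmxDr -scalemxAr mulmxA.
Qed.

Lemma perturbed_solve_norm q (y r : 'M[R]_(m, q)) :
  (M - eps *: E) *m y = r -> mxnorm1 y <= 2 * mxnorm1 (invmx M *m r).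
Proof.
move=> /perturbed_solveE y_eq.
have : mxnorm1 y <= mxnorm1 (invmx M *m r) + 2^-1 * mxnorm1 y.
  rewrite {1}y_eq; apply: le_trans (mxnorm1D _ _) _.
  rewrite lerD2l mxnorm1Z; apply: le_trans (ler_wpM2l _ (mxnorm1M _ _)) _ => //.
  by rewrite mulrA ler_wpM2r ?mxnorm1_ge0.
lra.
Qed.

Lemma perturbed_unitmx : M - eps *: E \in unitmx.
Proof.
apply: ker0_unitmx => y /perturbed_solve_norm.
by rewrite mulmx0 mxnorm10 mulr0 => /mxnorm1_le0.
Qed.

Lemma invmx_perturbedE :
  invmx (M - eps *: E) = invmx M + eps *: (invmx M *m E *m invmx (M - eps *: E)).
Proof. by rewrite {1}(perturbed_solveE (mulmxV perturbed_unitmx)) mulmx1. Qed.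

Lemma perturbed_form_diff (a : 'rV[R]_m) (b : 'cV[R]_m) :
  `|(a *m invmx (M - eps *: E) *m b) 0 0 - (a *m invmx M *m b) 0 0|
  <= `|eps| * (mxnorm1 (a *m invmx M *m E) * (2 * mxnorm1 (invmx M *m b))).
Proof.
have -> : (a *m invmx (M - eps *: E) *m b) 0 0 - (a *m invmx M *m b) 0 0
          = eps * (a *m invmx M *m E *m (invmx (M - eps *: E) *m b)) 0 0.
  rewrite {1}invmx_perturbedE mulmxDr mulmxDl mxE addrAC subrr add0r.
  by rewrite -scalemxAr -scalemxAl mxE !mulmxA.
rewrite normrM ler_wpM2l //; apply: le_trans (ler_mxnorm1_entry _ 0 0) _.
apply: le_trans (mxnorm1M _ _) _; rewrite ler_wpM2l ?mxnorm1_ge0 //.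
by apply: perturbed_solve_norm; rewrite mulKVmx // perturbed_unitmx.
Qed.

End Perturbation.

Theorem mainTheorem8 (R : realFieldType) (Omega : Type) (n p : nat)
  (l : Omega -> Omega -> R) (v : 'I_p -> Omega -> R) (xs : 'I_n -> Omega)
  (s2 : R) :
  (forall x y, l x y = l y x) ->
  \rank (basisV v xs) = p ->
  (exists Q : 'M[R]_(n, p),
      Q^T *m Q = 1%:M /\ (Q^T == (basisV v xs)^T)%MS /\
      psd ((1%:M - Q *m Q^T) *m gramL l xs *m (1%:M - Q *m Q^T))) ->
  0 < s2 ->
  forall x : Omega,
  exists C : R, exists delta : R, 0 < delta /\
    forall eps : R, 0 < eps -> eps < delta ->
      `| gp_var (keps l v eps) xs s2 x - limit_var l v xs s2 x | <= C * eps.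
Proof.
move=> _ rankV [Q [_ [/andP[QV _] PLP_psd]]] s2_gt0 x.
set A := gramL l xs + s2%:M; set V := basisV v xs.
set M := block_mx A V V^T 0; pose E : 'M[R]_(n + p) := block_mx 0 0 0 1%:M.
set w := row_mx (\row_i l x (xs i)) (\row_j v j x).
have M_unit : M \in unitmx.
  apply: saddle_point_unitmx rankV _; apply: addmx_scalar_definite s2_gt0 => a.
  exact: projected_psd_ge0 QV PLP_psd.
set c := mxnorm1 (invmx M *m E); have c_ge0 : 0 <= c := mxnorm1_ge0 _.
exists (mxnorm1 (w *m invmx M *m E) * (2 * mxnorm1 (invmx M *m w^T))).
exists (1 / (2 * c + 2)).
split=> [|eps eps_gt0]; first by rewrite divr_gt0 //; lra.
rewrite ltr_pdivlMr; last by lra.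
move=> eps_lt; have eps_small : `|eps| * c <= 2^-1 by rewrite gtr0_norm //; lra.
have N_eq : M - eps *: E = block_mx A V V^T (- eps%:M).
  rewrite scale_block_mx !scaler0 scalemx1 opp_block_mx add_block_mx !oppr0.
  by rewrite !addr0 add0r.
rewrite gp_var_keps_saddle ?gt_eqF //= -/A -/V -/w -N_eq ?perturbed_unitmx //.
rewrite /limit_var /= -/M -/w opprB addrC addrA subrK distrC.
apply: le_trans (perturbed_form_diff M_unit eps_small w w^T) _.
by rewrite gtr0_norm // mulrC.
Qed.
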